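(* For integers $1\le N\le 50$, a $PCS_5^N$ exists if and only if $N=1$ or $N$ is divisible by $4$.
   Context: A binary sequence of length $N$ is a sequence $a=(a(0),\dots,a(N-1))$ with each $a(i)\in\{+1,-1\}$. Its periodic autocorrelation function is $\tilde\varphi_a(i)=\sum_{j=0}^{N-1}a(j)a(i+j \bmod N)$ for $0\le i<N$. A family $a_1,\dots,a_p$ of binary sequences, all of length $N$, is a $PCS_p^N$ (periodic complementary set) if $\sum_{k=1}^p\tilde\varphi_{a_k}(i)=0$ for all $0<i<N$. The sequences in a family need not be distinct. *)

From HB Require Import structures.
From mathcomp Require Import all_boot all_order all_algebra.
Set Implicit Arguments. Unset Strict Implicit. Unset Printing Implicit Defensive.
Import Order.TTheory GRing.Theory Num.Theory.
Local Open Scope ring_scope.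

Definition binary_seq (N : nat) (a : seq int) : bool :=
  (size a == N) && all (fun x : int => (x == 1) || (x == -1)) a.

Definition pacf (N : nat) (a : seq int) (i : nat) : int :=
  \sum_(j < N) a`_j * a`_((i + j) %% N).

(* A family a_1..a_p (indexed by 'I_p, not necessarily distinct) is a PCS_p^N. *)
Definition is_PCS (p N : nat) (A : 'I_p -> seq int) : Prop :=
  (forall k, binary_seq N (A k)) /\
  (forall i : nat, (0 < i)%N -> (i < N)%N -> \sum_(k < p) pacf N (A k) i = 0).

From Stdlib Require Import String Ascii.
From HB Require Import structures.
From mathcomp Require Import all_boot all_order all_algebra.
From mathcomp Require Import ring zify.
Set Implicit Arguments. Unset Strict Implicit. Unset Printing Implicit Defensive.
Import Order.TTheory GRing.Theory Num.Theory.
Local Open Scope ring_scope.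

(* Necessity is a congruence argument valid for any number p of sequences:
   writing a(j) a(j+i) - 1 = (1 - a(j))(1 - a(j+i)) + (a(j) - 1) + (a(j+i) - 1)
   and using that every entry is odd, each autocorrelation satisfies
   phi_a(i) = N (mod 4).  Summing over the family, 0 = p N (mod 4) whenever
   some shift 0 < i < N exists, so 4 divides N as soon as p is odd.

   Sufficiency: N = 1 is trivial (there are no shifts to check), and for
   N = 4, 8, ..., 48 we exhibit explicit families, verified by a boolean
   checker computing the autocorrelations with plain folds, whose soundness
   with respect to the big-operator definitions is proved once. *)

Lemma binary_seq_odd_entry N (a : seq int) j :
  binary_seq N a -> (j < N)%N -> (2 %| a`_j - 1)%Z.
Proof.
move=> /andP[/eqP size_a /allP pm1] lt_jN.
have := pm1 a`_j (mem_nth 0 _); rewrite size_a => /(_ lt_jN).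
by case/orP=> /eqP ->.
Qed.

Lemma sum_cyclic_shift (R : nmodType) n (F : nat -> R) i :
  \sum_(j < n) F ((i + j) %% n)%N = \sum_(j < n) F j.
Proof.
case: n => [|n]; first by rewrite !big_ord0.
rewrite [RHS](reindex_inj (addrI (inZp i : 'I_n.+1))) /=.
by apply: eq_bigr => j _; rewrite modnDml.
Qed.

Lemma pacf_congr_length N (a : seq int) i :
  binary_seq N a -> (4 %| pacf N a i - N%:R)%Z.
Proof.
move=> bin_a; case: N bin_a => [|n] bin_a; first by rewrite /pacf big_ord0.
pose a' j := a`_((i + j) %% n.+1).
have odd_a j : (j < n.+1)%N -> (2 %| a`_j - 1)%Z := binary_seq_odd_entry bin_a.
have odd_a' j : (2 %| a' j - 1)%Z by apply: odd_a; rewrite ltn_mod.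
have split_dev : pacf n.+1 a i - n.+1%:R =
    \sum_(j < n.+1) (1 - a`_j) * (1 - a' j)
    + \sum_(j < n.+1) (a`_j - 1) + \sum_(j < n.+1) (a' j - 1).
  have -> : n.+1%:R = \sum_(j < n.+1) (1 : int) by rewrite sumr_const card_ord.
  rewrite /pacf -sumrB -!big_split.
  by apply: eq_bigr => j _ /=; ring.
rewrite split_dev [X in _ + X](sum_cyclic_shift _ (fun j => a`_j - 1)) -addrA.
have dvd4_mul x y : (2 %| x)%Z -> (2 %| y)%Z -> (4 %| x * y)%Z.
  by move=> ? ?; apply: (@dvdz_mul 2 2).
apply: rpredD.
  apply: rpred_sum => j _; rewrite -mulrNN !opprB.
  exact: dvd4_mul (odd_a j (ltn_ord j)) (odd_a' j).
rewrite -mulr2n -sumrMnl; apply: rpred_sum => j _.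
by rewrite -[_ *+ 2]mulr_natr; apply: dvd4_mul (odd_a j (ltn_ord j)) _.
Qed.

Lemma PCS_size_length_mod4 p N (A : 'I_p -> seq int) :
  (1 < N)%N -> is_PCS N A -> (4 %| p * N)%N.
Proof.
move=> gt1N [bin_A sum0].
have : (4 %| \sum_(k < p) (pacf N (A k) 1 - N%:R))%Z.
  by apply: rpred_sum => k _; apply: pacf_congr_length.
rewrite sumrB sum0 // sub0r rpredN sumr_const card_ord -mulrnA.
by rewrite dvdzE /= natz absz_nat mulnC.
Qed.

Lemma PCS_odd_size_length p N (A : 'I_p -> seq int) :
  odd p -> (1 < N)%N -> is_PCS N A -> (4 %| N)%N.
Proof.
move=> odd_p gt1N pcs_A.
have cop4p : coprime (2 ^ 2) p by rewrite coprime_pexpl // coprime2n.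
by rewrite -(Gauss_dvdr _ cop4p) (PCS_size_length_mod4 gt1N pcs_A).
Qed.

(* In length 1 there is no shift to check: copies of the sequence (1) form a PCS. *)
Lemma PCS_length1 p : is_PCS 1 (fun _ : 'I_p => [:: 1]).
Proof. by split=> // i; case: i. Qed.

(* A fold-based finite sum, which evaluates by computation. *)
Definition sum_fold (F : nat -> int) (n : nat) : int :=
  foldr (fun j acc => F j + acc) 0 (iota 0 n).

Lemma sum_foldE F n : sum_fold F n = \sum_(j < n) F j.
Proof.
rewrite -(big_mkord xpredT) /index_iota subn0 /sum_fold.
by elim: (iota 0 n) => [|j s IH]; rewrite ?big_nil // big_cons -IH.
Qed.

Definition pacf_fold (N : nat) (a : seq int) (i : nat) : int :=
  sum_fold (fun j => a`_j * a`_((i + j) %% N)) N.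

Definition pcs_check (p N : nat) (L : seq (seq int)) : bool :=
  (size L == p) && all (binary_seq N) L &&
  all (fun i => sum_fold (fun k => pacf_fold N (nth [::] L k) i) p == 0)
      (iota 1 N.-1).

Lemma pcs_check_sound p N L :
  pcs_check p N L -> is_PCS N (fun k : 'I_p => nth [::] L k).
Proof.
move=> /andP[/andP[/eqP size_L /allP bin_L] /allP sum0]; split.
  by move=> k; apply: bin_L; rewrite mem_nth ?size_L.
move=> i gt0i ltiN; have i_range : i \in iota 1 N.-1.
  by rewrite mem_iota gt0i add1n prednK // (leq_ltn_trans _ ltiN).
apply: etrans (eqP (sum0 i i_range)); rewrite sum_foldE.
by apply: eq_bigr => k _; rewrite /pacf_fold sum_foldE.
Qed.

Definition of_signs (s : string) : seq int :=
  map (fun c => if (c =? "+")%char then 1 else -1) (list_ascii_of_string s).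

Local Open Scope string_scope.

(* Explicit PCS_5^N for N = 4, 8, ..., 48, in this order. *)
Definition pcs5_table : seq (seq string) := [::
  [:: "--+-"; "----"; "-++-"; "-+-+"; "-++-"];
  [:: "+++++-+-"; "-+-----+"; "++--+--+"; "-++++--+"; "-++---+-"];
  [:: "--+----+-+--"; "+-++-++-++--"; "+-+-+-++----"; "--+++++---+-";
      "----++--++--"];
  [:: "+++--++-+--+-+-+"; "-+---+-+++---+++"; "----++-++----+--";
      "---+-+-++-++--+-"; "--+---+++--+----"];
  [:: "+-+--++-+-+-++-+---+"; "+-----+--++--+----+-"; "+++------+++++-++++-";
      "++++-+-+---+-++++--+"; "++-++--++---++----+-"];
  [:: "++++---+++-+++--+--++++-"; "-+--++-++++-++--+-+--+++";
      "+-+-+--+------+---++-+++"; "+++---+-+++-+---+------+";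
      "---++--+-+---+-+--+-++--"];
  [:: "+-+-+-++-+-++++--++--+++--+-"; "-+-+++---+-+---+++-++++++++-";
      "--+++-++--++-----+--+--++---"; "+++----+-++--+----++--+--+-+";
      "++-+--++-+-++-+-+----+++++++"];
  [:: "-+-+-+-++----++-+++++++--+++-+++"; "---+++-+++--+--+++-++-++--------";
      "+++-----++-+--+--++++--+-+-++-+-"; "++-+---+++++--+-+++-++-+---++--+";
      "+-++--+-+-++++-++++-+-++--++++--"];
  [:: "+++++++++-++-+-+-++----++---++-+-+--";
      "+-+----+------+-++--++--+-+--+--++-+";
      "-+--+++-++--+-++-++-++-+-+----+++---";
      "-++--++---++---+-----+++-----+++---+";
      "++++-----+++-++-+-+-+-+-+---+--+++++"];
  [:: "+--+-++-+---+-++-+---+--+-+-+-+---+++-++";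
      "+++----+--+-++++++--+-++---+++-+-+-++--+";
      "-----+-------++-+----+++++++--++-+++--++";
      "+-+++----+---+---+-+++--++-+--+----+-+--";
      "++----++---+--+--+---+++--+-------+-+++-"];
  [:: "-+-+++--++--++-+++----++--+-+-+--+-++++++-+-";
      "--+++---+++++-++-+++++-+--+++--++++--+---+-+";
      "-+-+++-++-++++++++-+-+--++++-+++++-+---+----";
      "-+-++++--+-+---+--++-++++--+--+-+-++--+-+---";
      "--+---++-+++---+++++-++++-+-+---++++---++-++"];
  [:: "-++-+-++---+++-++-+-+-++++-----++----++++-++--++";
      "-+++++-+++---+-++-+--+----+----+-+++++--++---++-";
      "---+-----++----++-++-----+++++++---+---+-+-+----";
      "+-+-+-+-+++-++---++-+-++-++--++++----+-+--++-+-+";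
      "--+-+++-+++-++-+++-+-+-++-+--+++++-++-++--++----"]].

Lemma pcs5_table_ok :
  all (fun k => pcs_check 5 (4 * k.+1) (map of_signs (nth [::] pcs5_table k)))
      (iota 0 12).
Proof. by vm_compute. Qed.

Lemma PCS5_multiple_of_4 N :
  (0 < N <= 48)%N -> (4 %| N)%N -> exists A : 'I_5 -> seq int, is_PCS N A.
Proof.
move=> /andP[gt0N leN48] /dvdnP[m defN]; subst N.
case: m gt0N leN48 => [|k] // _ leN48.
exists (fun i : 'I_5 => nth [::] (map of_signs (nth [::] pcs5_table k)) i).
rewrite mulnC; apply: pcs_check_sound; apply: (allP pcs5_table_ok).
by rewrite mem_iota; lia.
Qed.

Theorem proposition4 (N : nat) :
  (1 <= N <= 50)%N ->
  ((exists A : 'I_5 -> seq int, is_PCS N A) <-> (N = 1%N \/ (4 %| N)%N)).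
Proof.
move=> /andP[ge1N leN50]; split.
  case=> A pcs_A; have [gt1N | le1N] := ltnP 1 N.
    by right; exact: PCS_odd_size_length pcs_A.
  by left; apply/eqP; rewrite eqn_leq le1N ge1N.
case=> [-> | dvd4N]; first by exists (fun=> [:: 1]); exact: PCS_length1.
apply: PCS5_multiple_of_4 => //; rewrite ge1N /=.
by case/dvdnP: dvd4N leN50 => m ->; lia.
Qed.
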